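(* For two coprime natural numbers $a$ and $b$, \[ \alpha(\{a, b\}) = \frac{\lfloor \frac{a+b}{2} \rfloor}{a+b}. \]
   Context: For a finite $D \subset \mathbb{N} = \{1,2,\ldots\}$ and $n \geq 1$, the circulant graph $G_n$ with set of distances $D$ has vertex set $\{0, \ldots, n-1\}$, vertices $u, v$ (possibly equal) being adjacent iff $u - v \equiv d$ or $v - u \equiv d \pmod n$ for some $d \in D$. $\alpha(G)$ is the maximum size of an independent set (no two adjacent vertices, no looped vertex), and $\alpha(D) := \lim_{n\to\infty} \alpha(G_n)/n$ (which exists). *)

From mathcomp Require Import all_boot.
From Stdlib Require Import Reals.

Set Implicit Arguments.
Unset Strict Implicit.
Unset Printing Implicit Defensive.

(* Loops (u ~ u)
   are allowed (e.g. when n divides some d). *)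
Definition circ_adj (D : seq nat) (n : nat) (u v : 'I_n) : bool :=
  has (fun d => (nat_of_ord u == v + d %[mod n]) || (nat_of_ord v == u + d %[mod n])) D.

(* Independent set: no two (possibly equal) vertices are adjacent;
   in particular it contains no looped vertex. *)
Definition circ_independent (D : seq nat) (n : nat) (S : {set 'I_n}) : bool :=
  [forall u in S, forall v in S, ~~ circ_adj D u v].

Definition circ_alpha (D : seq nat) (n : nat) : nat :=
  \max_(S : {set 'I_n} | circ_independent D S) #|S|.

(* The sequence n |-> alpha(G_n)/n whose limit is alpha(D). *)
Definition circ_density (D : seq nat) (n : nat) : R :=
  (INR (circ_alpha D n) / INR n)%R.

From mathcomp Require Import all_boot zmodp zify.
From Stdlib Require Import Reals Lra.

(* Upper bound: from every vertex x the closed walk x, x + a, ..., x + ba,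
   x + ba - b, ..., x + ba - ab = x has a + b steps, each along an edge, so an
   independent set S occupies at most floor((a+b)/2) of its positions;
   averaging over x gives (a + b) |S| <= n floor((a+b)/2).
   Lower bound: put s = a + b.  Since a is invertible mod s and b = -a mod s,
   the residues 2ia mod s with 2i < s are pairwise at distance neither a nor b.
   Repeating this pattern on the blocks [qs, (q+1)s) of Z_n, keeping one block
   spare so that no edge wraps around, gives an independent set of size
   n floor(s/2) / s - O(s). *)

Set Implicit Arguments.
Unset Strict Implicit.
Unset Printing Implicit Defensive.

Lemma eqn_modMr_coprime s a i j : coprime s a -> i < s -> j < s ->
  (i * a == j * a %[mod s]) = (i == j).
Proof.
move=> co_sa; wlog le_ij : i j / i <= j.
  move=> W lt_is lt_js; case: (leqP i j) => [|/ltnW] le; first exact: W.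
  by rewrite eq_sym [RHS]eq_sym W.
move=> _ lt_js; rewrite eq_sym eqn_mod_dvd ?leq_mul2r ?le_ij ?orbT //.
rewrite -mulnBl Gauss_dvdl //; case: (posnP (j - i)) => [ji0 | ji_gt0].
  by rewrite ji0 dvdn0; apply/esym/eqP; lia.
by rewrite gtnNdvd //; [apply/esym/eqP; lia | lia].
Qed.

Lemma sum_cyclic_nonconsecutive (F : nat -> bool) s : F s = F 0 ->
  (forall k, k < s -> ~~ (F k && F k.+1)) -> \sum_(0 <= k < s) F k <= s %/ 2.
Proof.
move=> Fs0 nonconsec; rewrite leq_divRL // muln2 -addnn.
have shift : \sum_(0 <= k < s) F k.+1 = \sum_(0 <= k < s) F k.
  case: s Fs0 {nonconsec} => [|s] Fs0; first by rewrite !big_geq.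
  by rewrite big_nat_recr //= Fs0 big_nat_recl //= addnC.
rewrite -{1}shift -big_split /=.
rewrite -[X in _ <= X](card_ord s) -sum1_card big_mkord leq_sum // => k _.
by have := nonconsec k (ltn_ord k); case: (F k); case: (F k.+1).
Qed.

Definition closed_walk a b k := if k <= b then k * a else a * b - (k - b) * b.

Lemma closed_walk_end a b : closed_walk a b (a + b) = 0.
Proof.
by rewrite /closed_walk addnK subnn; case: leqP => //; lia.
Qed.

Lemma closed_walk_step a b k : k < a + b ->
  closed_walk a b k.+1 = closed_walk a b k + a \/
  closed_walk a b k = closed_walk a b k.+1 + b.
Proof.
rewrite /closed_walk => lt_k; case: (leqP k.+1 b) => [le_kb | lt_bk].
  by left; rewrite (ltnW le_kb) mulSnr.
right; case: (leqP k b) => [le_kb | lt_bk'].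
  have -> : k = b by lia.
  by rewrite subSnn mul1n mulnC subnK // leq_pmull //; lia.
have -> : k.+1 - b = (k - b).+1 by lia.
have : (k - b).+1 * b <= a * b by rewrite leq_mul2r; apply/orP; right; lia.
rewrite mulSn; move: (a * b) ((k - b) * b) => P X; lia.
Qed.

Lemma circ_adj_inZp D n m d : d \in D ->
  circ_adj D (inZp (m + d) : 'I_n.+1) (inZp m).
Proof.
by move=> Dd; apply/hasP; exists d => //=; rewrite modn_mod modnDml eqxx.
Qed.

Lemma circ_independent_nadj D n (S : {set 'I_n}) u v :
  circ_independent D S -> u \in S -> v \in S -> ~~ circ_adj D u v.
Proof. by move=> /forall_inP /(_ u) indS Su Sv; apply: (forall_inP (indS Su)). Qed.

Lemma circ_alpha_attained D n :
  exists2 S : {set 'I_n}, circ_independent D S & circ_alpha D n = #|S|.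
Proof.
have [|S indS max_S] := @eq_bigmax_cond _ (@circ_independent D n) (fun S => #|S|).
  by apply/card_gt0P; exists set0; apply/forall_inP => u; rewrite in_set0.
by exists S.
Qed.

Lemma sum_inZp_addr n c (S : {set 'I_n.+1}) :
  \sum_(x : 'I_n.+1) (inZp (x + c) \in S) = #|S|.
Proof.
have inZp_addr_inj : injective (fun x : 'I_n.+1 => inZp (x + c) : 'I_n.+1).
  move=> x y /(congr1 val) /eqP /=; rewrite eqn_modDr !modn_small // => /eqP.
  exact: val_inj.
rewrite -(card_preimset S inZp_addr_inj) -sum1_card [RHS]big_mkcond /=.
by apply: eq_bigr => x _; rewrite inE; case: (_ \in S).
Qed.

Lemma independent_closed_walk a b n (S : {set 'I_n.+1}) (x : 'I_n.+1) :
  circ_independent [:: a; b] S ->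
  \sum_(0 <= k < a + b) (inZp (x + closed_walk a b k) \in S) <= (a + b) %/ 2.
Proof.
move=> indS; apply: sum_cyclic_nonconsecutive => [|k lt_k].
  by rewrite closed_walk_end.
have nadj d m : d \in [:: a; b] ->
    ~~ (((inZp (m + d) : 'I_n.+1) \in S) && (inZp m \in S)).
  move=> Dd; apply/andP => -[S1 S2].
  by have := circ_independent_nadj indS S1 S2; rewrite circ_adj_inZp.
by case: (closed_walk_step lt_k) => ->; rewrite addnA; [rewrite andbC|];
  apply: nadj; rewrite !inE eqxx ?orbT.
Qed.

Lemma independent_card_ub a b n (S : {set 'I_n.+1}) :
  circ_independent [:: a; b] S -> (a + b) * #|S| <= n.+1 * ((a + b) %/ 2).
Proof.
move=> indS.
have -> : (a + b) * #|S| =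
    \sum_(0 <= k < a + b) \sum_(x : 'I_n.+1) (inZp (x + closed_walk a b k) \in S).
  by rewrite (eq_bigr (fun _ => #|S|)) ?sum_nat_const_nat ?subn0 // => k _;
    rewrite sum_inZp_addr.
rewrite exchange_big /= -[X in _ <= X * _](card_ord n.+1) -sum_nat_const.
by apply: leq_sum => x _; exact: independent_closed_walk.
Qed.

Lemma circ_alpha_ub a b n :
  (a + b) * circ_alpha [:: a; b] n.+1 <= n.+1 * ((a + b) %/ 2).
Proof.
by have [S indS ->] := circ_alpha_attained [:: a; b] n.+1; exact: independent_card_ub.
Qed.

Lemma even_multiples_nadj a b i j d : coprime (a + b) a ->
  i < (a + b) %/ 2 -> j < (a + b) %/ 2 -> d \in [:: a; b] ->
  2 * i * a != 2 * j * a + d %[mod a + b].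
Proof.
move=> co lt_i lt_j; rewrite !inE => /orP[]/eqP->.
  by rewrite -mulSnr eqn_modMr_coprime //; lia.
rewrite -(eqn_modDr a) -addnA (addnC b) modnDr -mulSnr eqn_modMr_coprime //; lia.
Qed.

Section BlockSet.
Variables (a b n Q : nat).
Hypotheses (a_gt0 : 0 < a) (b_gt0 : 0 < b) (coprime_ab : coprime a b).
Hypothesis Q_fits : Q * (a + b) <= n.+1 - (a + b).

Let s := a + b.
Let m := s %/ 2.

Let coprime_sa : coprime s a.
Proof. by rewrite /s coprime_sym /coprime gcdnDl. Qed.

Definition block_vertex (p : 'I_Q * 'I_m) : nat := p.1 * s + (2 * p.2 * a) %% s.

Lemma block_vertex_lt p : block_vertex p + s < n.+1.
Proof.
have lt_r : (2 * p.2 * a) %% s < s by rewrite ltn_pmod // /s; lia.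
have : p.1.+1 * s <= Q * s by rewrite leq_mul2r ltn_ord orbT.
rewrite /block_vertex mulSn; lia.
Qed.

Lemma block_vertex_inj : injective block_vertex.
Proof.
move=> [q i] [q' j]; rewrite /block_vertex /= => e.
have s_gt0 : 0 < s by rewrite /s; lia.
have eq_q : q = q' :> nat.
  have := congr1 (divn^~ s) e.
  by rewrite /= !divnMDl // !divn_small ?ltn_pmod // !addn0.
move: e; rewrite eq_q => /eqP; rewrite eqn_add2l eqn_modMr_coprime; last 3 first.
- exact: coprime_sa.
- by move: (ltn_ord i); rewrite /m; lia.
- by move: (ltn_ord j); rewrite /m; lia.
by rewrite eqn_pmul2l // => /eqP eq_i; congr pair; apply: val_inj.
Qed.

Lemma block_vertex_nadj p p' d : d \in [:: a; b] ->
  block_vertex p != block_vertex p' + d %[mod n.+1].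
Proof.
move=> Dd; have lt_d : d < s by move: Dd; rewrite !inE /s => /orP[]/eqP->; lia.
have := block_vertex_lt p; have := block_vertex_lt p'.
move=> lt_p' lt_p; rewrite !modn_small; [|lia|lia].
have := even_multiples_nadj coprime_sa (ltn_ord p.2) (ltn_ord p'.2) Dd.
apply: contraNneq => /(congr1 (modn^~ s)).
by rewrite /block_vertex /= -addnA !modnMDl modn_mod modnDml => ->.
Qed.

Definition block_set : {set 'I_n.+1} :=
  [set inord (block_vertex p) | p : 'I_Q * 'I_m].

Lemma card_block_set : #|block_set| = Q * m.
Proof.
rewrite card_imset ?card_prod ?card_ord // => p p' /(congr1 (@nat_of_ord _)).
rewrite !inordK; [exact: block_vertex_inj | |];
  by have := block_vertex_lt p'; have := block_vertex_lt p; lia.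
Qed.

Lemma block_set_independent : circ_independent [:: a; b] block_set.
Proof.
apply/forall_inP => _ /imsetP[p _ ->]; apply/forall_inP => _ /imsetP[p' _ ->].
have inordE q : (inord (block_vertex q) : 'I_n.+1) = block_vertex q :> nat.
  by rewrite inordK //; have := block_vertex_lt q; lia.
by apply/hasPn => d Dd; rewrite !inordE negb_or !(block_vertex_nadj _ _ Dd).
Qed.
End BlockSet.

Lemma circ_alpha_lb a b n : 0 < a -> 0 < b -> coprime a b ->
  n.+1 * ((a + b) %/ 2) <=
    (a + b) * circ_alpha [:: a; b] n.+1 + 2 * (a + b) * ((a + b) %/ 2).
Proof.
move=> a_gt0 b_gt0 co_ab; set s := a + b; set m := s %/ 2.
set Q := (n.+1 - s) %/ s.
have Q_fits : Q * s <= n.+1 - s by exact: leq_divM.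
have n_lt : n.+1 - s < Q.+1 * s by apply: ltn_ceil; rewrite /s; lia.
have Qm_le : Q * m <= circ_alpha [:: a; b] n.+1.
  rewrite -(card_block_set a_gt0 b_gt0 co_ab Q_fits).
  exact: leq_bigmax_cond (block_set_independent a_gt0 b_gt0 co_ab Q_fits).
have : n.+1 * m <= Q.+2 * s * m by rewrite leq_mul2r; apply/orP; right; lia.
have : s * (Q * m) <= s * circ_alpha [:: a; b] n.+1 by rewrite leq_mul2l Qm_le orbT.
nia.
Qed.

Lemma Un_cv_inv_rate (u : nat -> R) (l C : R) :
  (forall n, 0 < n -> (Rabs (u n - l) <= C / INR n)%R) -> Un_cv u l.
Proof.
move=> rate eps eps_gt0.
have C1_gt0 : (0 < Rabs C + 1)%R by have := Rabs_pos C; lra.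
have [N [invN_lt N_gt0]] :=
  archimed_cor1 (eps / (Rabs C + 1)) (Rdiv_lt_0_compat _ _ eps_gt0 C1_gt0).
exists N => n le_Nn; rewrite /R_dist.
have n_gt0 : 0 < n by move/leP: N_gt0; move/leP: le_Nn; lia.
have invn_le : (/ INR n <= / INR N)%R.
  by apply: Rinv_le_contravar; [apply: lt_0_INR | apply: le_INR].
have invN_gt0 : (0 < / INR n)%R by apply/Rinv_0_lt_compat/lt_0_INR/leP.
apply: Rle_lt_trans (rate n n_gt0) _; rewrite /Rdiv.
have : (/ INR N * (Rabs C + 1) < eps)%R.
  by move: invN_lt; rewrite /Rdiv => /(Rmult_lt_compat_r (Rabs C + 1) _ _ C1_gt0);
    rewrite Rmult_assoc Rinv_l ?Rmult_1_r; lra.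
have := Rle_abs C; nra.
Qed.

Lemma density_error (x n m s C : nat) : 0 < n -> 0 < s ->
  s * x <= n * m -> n * m <= s * x + C ->
  (Rabs (INR x / INR n - INR m / INR s) <= INR C / INR n)%R.
Proof.
move=> /leP/lt_0_INR n_gt0 /leP s_gt0 /leP/le_INR ub /leP/le_INR lb.
rewrite !mult_INR in ub; rewrite plus_INR !mult_INR in lb.
have s_ge1 : (1 <= INR s)%R by apply: (le_INR 1).
have -> : (INR x / INR n - INR m / INR s =
           (INR s * INR x - INR n * INR m) * / INR s * / INR n)%R by field; lra.
rewrite !Rabs_mult !Rabs_inv ![Rabs (INR _)]Rabs_pos_eq; try lra.
apply: Rmult_le_compat_r; first by apply/Rlt_le/Rinv_0_lt_compat.
have : (Rabs (INR s * INR x - INR n * INR m) <= INR C)%R by apply: Rabs_le; lra.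
have : (/ INR s <= 1)%R by rewrite -Rinv_1; apply: Rinv_le_contravar; lra.
have : (0 < / INR s)%R by apply: Rinv_0_lt_compat; lra.
have := Rabs_pos (INR s * INR x - INR n * INR m).
nra.
Qed.

Theorem proposition4 (a b : nat) :
  0 < a -> 0 < b -> coprime a b ->
  Un_cv (circ_density [:: a; b]) (INR ((a + b) %/ 2) / INR (a + b))%R.
Proof.
move=> a_gt0 b_gt0 co_ab.
apply: (@Un_cv_inv_rate _ _ (INR (2 * (a + b) * ((a + b) %/ 2)))) => -[//|n] _.
apply: density_error; [by [] | lia | exact: circ_alpha_ub | exact: circ_alpha_lb].
Qed.
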